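(* Fix $1<p<2$. There exist solutions $g,h$ on $[0,\infty)$ of the system (S) described in the context such that $g(0)+2(3-p)h(0)<0$, $h>0$ and $\frac{dg}{dt}+h>0$ on all of $[0,\infty)$, and, as $r\to\infty$ (where $t=w_s(r)$), \[ g=-r-\frac{4}{3-p}+O(r^{-1}),\qquad h=\frac{r}{3-p}+1+O(r^{-1}). \]
   Context: Mass 2 spatial Schwarzschild: $(\mathbb{R}^3\setminus B_1(0),g_s=(1+1/r)^4\delta_{ij})$, $r=|x|$. Let $u_s$ be the radial solution of $\operatorname{div}_{g_s}(|\nabla u_s|^{p-2}\nabla u_s)=0$ with $u_s=1$ at $r=1$, $u_s\to0$ as $r\to\infty$; $w_s=(1-p)\log u_s$, and $r\mapsto t=w_s(r)$ is an increasing bijection $[1,\infty)\to[0,\infty)$ used to regard functions of $t$ as functions of $r$. $W_s(t)=\int_{\{w_s=t\}}|\nabla w_s|_{g_s}^2\,da_{g_s}$. System (S) for functions $g,h$ of $t$: $\left(\frac{dg}{dt}+h\right)W_s^2+\left(g-2(p-2)h+(p-1)(3-p)\frac{dh}{dt}\right)W_s\frac{dW_s}{dt}+\frac{(p-1)(5-p)}{4}h\left(\frac{dW_s}{dt}\right)^2=0$ and $\left(\frac{dg}{dt}+h\right)W_s^2-\frac{(p-1)(5-p)}{4}h\left(\frac{dW_s}{dt}\right)^2=0$. *)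

From Stdlib Require Import Reals.
Open Scope R_scope.

(* Derivative of f at x relative to the set D (two-sided at interior points,
   one-sided at an endpoint such as 0 of [0,oo) or 1 of [1,oo)). *)
Definition deriv_within (D : R -> Prop) (f : R -> R) (x l : R) : Prop :=
  forall eps, 0 < eps -> exists delta, 0 < delta /\
    forall y, D y -> y <> x -> Rabs (y - x) < delta ->
      Rabs ((f y - f x) / (y - x) - l) < eps.

(* Mass 2 spatial Schwarzschild: g_s = phi_s^4 delta, phi_s = 1 + 1/r. *)
Definition phi_s (r : R) : R := 1 + 1 / r.

Definition sphere_area_s (r : R) : R := 4 * PI * r ^ 2 * phi_s r ^ 4.

Definition grad_norm_s (r dfdr : R) : R := Rabs dfdr / phi_s r ^ 2.

(* g_s-flux through {|x|=r} of |grad u|^{p-2} grad u, for radial u with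
   u' = du:  (|grad u|^{p-2} * d_nu u) * area. *)
Definition plap_flux_s (p : R) (du : R -> R) (r : R) : R :=
  Rpower (grad_norm_s r (du r)) (p - 2) * (du r / phi_s r ^ 2) * sphere_area_s r.

(* u (with derivative du in r) is the radial solution on [1,oo) of
   div_{g_s}(|grad u|^{p-2} grad u) = 0 (for radial u: the flux through
   coordinate spheres has zero r-derivative), u = 1 at r = 1, u -> 0 at oo. *)
Definition is_radial_plap_solution (p : R) (u du : R -> R) : Prop :=
  (forall r, 1 <= r -> deriv_within (fun s => 1 <= s) u r (du r)) /\
  (forall r, 1 <= r -> deriv_within (fun s => 1 <= s) (plap_flux_s p du) r 0) /\
  u 1 = 1 /\
  (forall eps, 0 < eps -> exists M, forall r, M <= r -> Rabs (u r) < eps).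

Definition w_of (p : R) (u : R -> R) (r : R) : R := (1 - p) * ln (u r).
Definition dw_of (p : R) (u du : R -> R) (r : R) : R := (1 - p) * du r / u r.

(* W_s(t) = int_{w_s = t} |grad w_s|^2 da, where rho t is the radius with
   w_s(rho t) = t (the level set is the coordinate sphere of that radius). *)
Definition W_of (p : R) (u du rho : R -> R) (t : R) : R :=
  grad_norm_s (rho t) (dw_of p u du (rho t)) ^ 2 * sphere_area_s (rho t).

Definition systemS (p W dW g dg h dh : R) : Prop :=
  (dg + h) * W ^ 2
    + (g - 2 * (p - 2) * h + (p - 1) * (3 - p) * dh) * W * dW
    + (p - 1) * (5 - p) / 4 * h * dW ^ 2 = 0 /\
  (dg + h) * W ^ 2 - (p - 1) * (5 - p) / 4 * h * dW ^ 2 = 0.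

From Stdlib Require Import Reals Lra List.
From Coquelicot Require Import Coquelicot.
Import ListNotations.
Open Scope R_scope.

(* Write s = p - 1, so 0 < s < 1. The flux of |grad u|^(p-2) grad u through the
   coordinate spheres is constant, which gives u' = -E for an explicit profile E
   with E'/E = -2 (r + s - 1) / (s r (r + 1)), and dr/dt = q := u / (s E).
   Then W = 4 pi r^2 / q^2 and dW/dt = a W for an explicit rational a(r, q).
   Given this, (S) says that g is determined by h, dh/dt and a (eliminate
   dg/dt + h between the two equations) and that h solves the single ODE
   dg/dt + h = s (4 - s) / 4 h a^2, which has the explicit solution
     h = q (F - s/2 E (F q - (r + 1)^2 / ((2 - s) r))),   F = 1 - 1/r^2.
   Everything else follows from the bounds
     r/(2-s) + 1 < q < r/(2-s) + 1 + 1/(s r)   and   (2 - s)(r - 1) q < r (r + 1),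
   each obtained by comparing u with s E P(r) for a rational P: the difference
   is monotone and tends to 0, so it has a sign. They make h and a positive, hence
   dg/dt + h > 0; and since E r^2 is bounded they turn (g + r + 4/(2-s)) (r + 1)
   and (h - r/(2-s) - 1) r into polynomials in the bounded quantities 1/r,
   r (q - r/(2-s) - 1) and E r^2, which gives the O(1/r) expansions. *)

Lemma deriv_within_ext D f g x l : (forall y, D y -> f y = g y) -> D x ->
  deriv_within D f x l -> deriv_within D g x l.
Proof.
  intros He Dx H eps heps. destruct (H eps heps) as [d [hd Hd]].
  exists d. split; [exact hd|]. intros y Dy hyx hy.
  rewrite <- (He y Dy), <- (He x Dx). now apply Hd.
Qed.

Lemma deriv_within_of_filterlim D f x l :
  filterlim (fun y => (f y - f x) / (y - x))
    (within (fun y => D y /\ y <> x) (locally x)) (locally l) ->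
  deriv_within D f x l.
Proof.
  intros H eps heps.
  destruct (proj1 (filterlim_locally _ _) H (mkposreal eps heps)) as [d Hd].
  exists d. split; [apply cond_pos|].
  intros y Dy hyx hy. exact (Hd y hy (conj Dy hyx)).
Qed.

Lemma filterlim_diff_quot f x l : is_derive f x l ->
  filterlim (fun y => (f y - f x) / (y - x))
    (within (fun y => y <> x) (locally x)) (locally l).
Proof.
  intro H. apply is_derive_Reals in H. apply filterlim_locally. intro eps.
  destruct (H eps (cond_pos eps)) as [d Hd]. exists d. intros y hy hyx.
  specialize (Hd (y - x)). rewrite Rplus_minus in Hd.
  apply Hd; [lra | exact hy].
Qed.

Section InverseFunction.
Variables (w rho : R -> R) (D : R -> Prop) (a : R).
Hypotheses (w_incr : forall x y, a <= x -> x < y -> w x < w y)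
  (rho_inv : forall t, D t -> a <= rho t /\ w (rho t) = t).

Lemma lt_of_w_lt x z : a <= x -> a <= z -> w x < w z -> x < z.
Proof.
  intros hx hz hw. destruct (Rlt_or_le x z) as [h|h]; [exact h|].
  destruct (Rle_lt_or_eq_dec z x h) as [h'|h']; [|subst; lra].
  specialize (w_incr z x hz h'). lra.
Qed.

Lemma inverse_continuous t : D t -> forall eta, 0 < eta ->
  exists delta, 0 < delta /\ forall y, D y -> Rabs (y - t) < delta -> Rabs (rho y - rho t) < eta.
Proof.
  intros Dt eta heta. destruct (rho_inv t Dt) as [ht wt].
  set (b := rho t + eta). assert (hb : t < w b) by (rewrite <- wt; apply w_incr; unfold b; lra).
  assert (above : forall y, D y -> y < w b -> rho y < b).
  { intros y Dy hy. destruct (rho_inv y Dy) as [hy1 hy2].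
    apply lt_of_w_lt; [exact hy1 | unfold b; lra | lra]. }
  destruct (Rle_lt_dec a (rho t - eta)) as [hc|hc].
  - set (c := rho t - eta) in *.
    assert (hc' : w c < t) by (rewrite <- wt; apply w_incr; [exact hc | unfold c; lra]).
    exists (Rmin (w b - t) (t - w c)). split; [apply Rmin_pos; lra|].
    intros y Dy hy. apply Rabs_def2 in hy. destruct hy as [hy1 hy2].
    assert (h1 := Rmin_l (w b - t) (t - w c)). assert (h2 := Rmin_r (w b - t) (t - w c)).
    assert (c < rho y).
    { destruct (rho_inv y Dy) as [hy3 hy4]. apply lt_of_w_lt; [exact hc | exact hy3 | lra]. }
    assert (rho y < b) by (apply above; [exact Dy | lra]).
    apply Rabs_def1; unfold b, c in *; lra.
  - exists (w b - t). split; [lra|].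
    intros y Dy hy. apply Rabs_def2 in hy. destruct hy as [hy1 hy2].
    assert (rho y < b) by (apply above; [exact Dy | lra]).
    destruct (rho_inv y Dy) as [hy3 _].
    apply Rabs_def1; unfold b in *; lra.
Qed.

Lemma inverse_filterlim t : D t ->
  filterlim rho (within (fun y => D y /\ y <> t) (locally t))
    (within (fun z => z <> rho t) (locally (rho t))).
Proof.
  intros Dt P [eps HP].
  destruct (inverse_continuous t Dt eps (cond_pos eps)) as [d [hd Hd]].
  exists (mkposreal d hd). intros y hy [Dy hyt]. apply HP.
  - exact (Hd y Dy hy).
  - intro e. apply hyt.
    rewrite <- (proj2 (rho_inv y Dy)), <- (proj2 (rho_inv t Dt)), e. reflexivity.
Qed.

Lemma deriv_within_comp_inverse (f w' : R -> R) (t f' : R) :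
  D t -> is_derive w (rho t) (w' (rho t)) -> w' (rho t) <> 0 -> is_derive f (rho t) f' ->
  deriv_within D (fun y => f (rho y)) t (f' / w' (rho t)).
Proof.
  intros Dt Hw hw' Hf. apply deriv_within_of_filterlim.
  (* As y = w (rho y), the difference quotient of f o rho at t is that of f
     divided by that of w, both taken between rho t and rho y. *)
  set (Q g := fun z => (g z - g (rho t)) / (z - rho t)).
  apply (filterlim_ext_loc (fun y => Q f (rho y) * / Q w (rho y))).
  - exists (mkposreal 1 Rlt_0_1). intros y _ [Dy hyt].
    destruct (rho_inv y Dy) as [_ wy]. destruct (rho_inv t Dt) as [_ wt].
    assert (hr : rho y - rho t <> 0).
    { intro e. apply hyt. rewrite <- wy, <- wt. f_equal. lra. }
    unfold Q. rewrite wy, wt. field. split; [lra | exact hr].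
  - eapply (filterlim_comp_2 _ _ Rmult).
    + eapply filterlim_comp; [apply inverse_filterlim, Dt | exact (filterlim_diff_quot f _ _ Hf)].
    + eapply filterlim_comp; [eapply filterlim_comp|].
      * apply inverse_filterlim, Dt.
      * exact (filterlim_diff_quot w _ _ Hw).
      * apply (filterlim_Rbar_inv (w' (rho t))). intro e. apply hw'. now injection e.
    + exact (filterlim_Rbar_mult f' (/ w' (rho t)) _ eq_refl).
Qed.

End InverseFunction.

Definition extend_left (a : R) (f f' : R -> R) (y : R) : R :=
  if Rle_dec a y then f y else f a + f' a * (y - a).

Lemma extend_left_eq a f f' y : a <= y -> extend_left a f f' y = f y.
Proof. intro h. unfold extend_left. destruct (Rle_dec a y); [reflexivity | lra]. Qed.

Lemma is_derive_extend_left a (f f' : R -> R) :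
  (forall x, a <= x -> deriv_within (fun y => a <= y) f x (f' x)) ->
  forall x, a <= x -> is_derive (extend_left a f f') x (f' x).
Proof.
  intros H x hx. apply is_derive_Reals. intros eps heps.
  destruct (H x hx eps heps) as [d [hd Hd]].
  assert (Hq : forall h, h <> 0 -> a <= x + h -> Rabs h < d ->
            Rabs ((extend_left a f f' (x + h) - extend_left a f f' x) / h - f' x) < eps).
  { intros h hh0 h1 hh. rewrite !extend_left_eq by lra.
    specialize (Hd (x + h)). replace (x + h - x) with h in Hd by ring.
    apply Hd; [exact h1 | intro; apply hh0; lra | exact hh]. }
  destruct (Rle_lt_or_eq_dec a x hx) as [hlt|<-].
  - assert (hm : 0 < Rmin d (x - a)) by (apply Rmin_pos; lra).
    exists (mkposreal _ hm). intros h hh0 hh. simpl in hh.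
    assert (h1 := Rmin_l d (x - a)). assert (h2 := Rmin_r d (x - a)).
    apply Rabs_def2 in hh. apply Hq; [exact hh0 | lra | apply Rabs_def1; lra].
  - exists (mkposreal d hd). intros h hh0 hh. simpl in hh.
    destruct (Rle_dec a (a + h)) as [h1|h1]; [now apply Hq|].
    unfold extend_left. destruct (Rle_dec a (a + h)); [contradiction|].
    destruct (Rle_dec a a); [|lra].
    replace ((f a + f' a * (a + h - a) - f a) / h - f' a) with 0 by (field; exact hh0).
    now rewrite Rabs_R0.
Qed.

Lemma mvt_ray (f f' : R -> R) a x y :
  (forall z, a <= z -> is_derive f z (f' z)) -> a <= x < y ->
  exists c, a <= c /\ f y - f x = f' c * (y - x).
Proof.
  intros H hxy. destruct (MVT_cor2 f f' x y) as [c [e hc]]; [lra| |].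
  - intros c hc. apply is_derive_Reals, H. lra.
  - exists c. split; [lra | exact e].
Qed.

Section Monotonicity.
Variables (f f' : R -> R) (a : R).
Hypothesis Hf : forall z, a <= z -> is_derive f z (f' z).

Lemma increasing_of_deriv_pos : (forall z, a <= z -> 0 < f' z) ->
  forall x y, a <= x -> x < y -> f x < f y.
Proof.
  intros Hp x y hx hxy. destruct (mvt_ray f f' a x y Hf) as [c [hc e]]; [lra|].
  specialize (Hp c hc). nra.
Qed.

Lemma decreasing_of_deriv_neg : (forall z, a <= z -> f' z < 0) ->
  forall x y, a <= x -> x < y -> f y < f x.
Proof.
  intros Hn x y hx hxy. destruct (mvt_ray f f' a x y Hf) as [c [hc e]]; [lra|].
  specialize (Hn c hc). nra.
Qed.

Lemma nondecreasing_of_deriv_nonneg : (forall z, a <= z -> 0 <= f' z) ->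
  forall x y, a <= x -> x <= y -> f x <= f y.
Proof.
  intros Hp x y hx hxy. destruct (Rle_lt_or_eq_dec x y hxy) as [hlt|<-]; [|lra].
  destruct (mvt_ray f f' a x y Hf) as [c [hc e]]; [lra|].
  specialize (Hp c hc). nra.
Qed.

Lemma constant_of_deriv_zero : (forall z, a <= z -> f' z = 0) ->
  forall x, a <= x -> f x = f a.
Proof.
  intros H0 x hx. destruct (Rle_lt_or_eq_dec a x hx) as [hlt|<-]; [|reflexivity].
  destruct (mvt_ray f f' a a x Hf) as [c [hc e]]; [lra|].
  rewrite H0 in e by exact hc. lra.
Qed.

End Monotonicity.

Lemma is_lim_pinfty_0_of_abs_le (f : R -> R) C a : 0 < a ->
  (forall y, a <= y -> Rabs (f y) <= C / y) -> is_lim f p_infty 0.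
Proof.
  intros ha H.
  assert (Hc : forall c, is_lim (fun y => c / y) p_infty 0).
  { intro c. replace (Finite 0) with (Rbar_mult c (Rbar_inv p_infty)) by (simpl; f_equal; ring).
    apply is_lim_scal_l, is_lim_inv; [apply is_lim_id | discriminate]. }
  apply (is_lim_le_le_loc (fun y => - C / y) (fun y => C / y)).
  - exists a. intros y hy. specialize (H y ltac:(lra)). apply Rabs_le_between in H.
    unfold Rdiv in *. rewrite Ropp_mult_distr_l_reverse. exact H.
  - apply Hc.
  - apply Hc.
Qed.

Lemma pos_of_decreasing_to_0 (Z Z' : R -> R) a :
  (forall y, a <= y -> is_derive Z y (Z' y)) -> (forall y, a <= y -> Z' y < 0) ->
  is_lim Z p_infty 0 -> 0 < Z a.
Proof.
  intros HZ Hn Hlim. destruct (Rlt_or_le 0 (Z a)) as [h|h]; [exact h|exfalso].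
  assert (Hdec := decreasing_of_deriv_neg Z Z' a HZ Hn).
  assert (Hle : Rbar_le 0 (Z (a + 1))).
  { apply (is_lim_le_loc Z (fun _ => Z (a + 1)) p_infty); [|exact Hlim | apply is_lim_const].
    exists (a + 1). intros y hy. apply Rlt_le, Hdec; lra. }
  simpl in Hle. assert (Z (a + 1) < Z a) by (apply Hdec; lra). lra.
Qed.

Definition profile_logderiv (s r : R) : R := -2 * (r + s - 1) / (s * r * (r + 1)).

Definition profile (s k x : R) : R :=
  phi_s x ^ 2 * exp ((ln k - 2 * ln x - 4 * ln (phi_s x)) / s).

Lemma phi_s_gt_1 x : 0 < x -> 1 < phi_s x.
Proof. intro hx. unfold phi_s. assert (0 < 1 / x) by (apply Rdiv_lt_0_compat; lra). lra. Qed.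

Lemma profile_pos s k x : 0 < x -> 0 < profile s k x.
Proof.
  intro hx. unfold profile. apply Rmult_lt_0_compat; [|apply exp_pos].
  apply pow_lt. assert (h := phi_s_gt_1 x hx). lra.
Qed.

Lemma profile_deriv s k x : 0 < s -> 0 < x ->
  is_derive (profile s k) x (profile_logderiv s x * profile s k x).
Proof.
  intros hs hx. assert (hph := phi_s_gt_1 x hx). unfold profile, phi_s in *.
  auto_derive.
  - repeat split; lra.
  - unfold profile_logderiv, Rminus, Rdiv. field. lra.
Qed.

Lemma profile_mul_sqr_le s k x : 0 < s < 1 -> 0 < k -> 1 <= x ->
  profile s k x * (x * x) <= exp (ln k / s).
Proof.
  intros hs hk hx. assert (hph := phi_s_gt_1 x ltac:(lra)).
  assert (hlx : 0 <= ln x) by (rewrite <- ln_1; apply ln_le; lra).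
  assert (hlph : 0 <= ln (phi_s x)) by (rewrite <- ln_1; apply ln_le; lra).
  assert (hsinv : 1 < / s) by (rewrite <- Rinv_1; apply Rinv_lt_contravar; lra).
  assert (Hexp : ln (profile s k x * (x * x)) <= ln k / s).
  { unfold profile.
    rewrite !ln_mult, ln_exp, ln_pow
      by (try apply Rmult_lt_0_compat; try apply pow_lt; try apply exp_pos; lra).
    unfold Rdiv. simpl INR. nra. }
  rewrite <- (exp_ln (profile s k x * (x * x)))
    by (apply Rmult_lt_0_compat; [apply profile_pos|]; nra).
  destruct (Rle_lt_or_eq_dec _ _ Hexp) as [hlt|e];
    [apply Rlt_le, exp_increasing, hlt | rewrite e; lra].
Qed.

Lemma sphere_area_s_pos x : 0 < x -> 0 < sphere_area_s x.
Proof.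
  intro hx. assert (hph := phi_s_gt_1 x hx). assert (PI > 0) by apply PI_RGT_0.
  unfold sphere_area_s.
  apply Rmult_lt_0_compat; [apply Rmult_lt_0_compat; [lra|] | ]; apply pow_lt; lra.
Qed.

Lemma plap_flux_s_factor p du x : 0 < x ->
  exists c, 0 < c /\ plap_flux_s p du x = c * du x.
Proof.
  intro hx. assert (hph := phi_s_gt_1 x hx).
  exists (Rpower (grad_norm_s x (du x)) (p - 2) / phi_s x ^ 2 * sphere_area_s x). split.
  - apply Rmult_lt_0_compat; [|now apply sphere_area_s_pos].
    apply Rdiv_lt_0_compat; [apply exp_pos | apply pow_lt; lra].
  - unfold plap_flux_s. field. lra.
Qed.

Lemma plap_flux_s_solve p du x K : 1 < p < 2 -> 0 < x -> du x < 0 -> plap_flux_s p du x = K ->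
  du x = - profile (p - 1) (- K / (4 * PI)) x.
Proof.
  intros hp hx hd hK. unfold plap_flux_s, grad_norm_s, sphere_area_s in hK.
  assert (hph := phi_s_gt_1 x hx). set (ph := phi_s x) in *.
  rewrite Rabs_left in hK by lra.
  assert (hph2 : 0 < ph ^ 2) by (apply pow_lt; lra).
  set (X := - du x / ph ^ 2) in *.
  assert (hX : 0 < X) by (unfold X; apply Rdiv_lt_0_compat; lra).
  assert (Hd : du x = - X * ph ^ 2) by (unfold X; field; lra).
  assert (PI > 0) by apply PI_RGT_0.
  assert (HR : Rpower X (p - 1) = (- K / (4 * PI)) / (x ^ 2 * ph ^ 4)).
  { replace (p - 1) with ((p - 2) + 1) by ring. rewrite Rpower_plus, Rpower_1 by lra.
    rewrite <- hK, Hd. field. repeat split; lra. }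
  assert (hK0 : 0 < - K / (4 * PI)).
  { replace (- K / (4 * PI)) with (Rpower X (p - 1) * (x ^ 2 * ph ^ 4))
      by (rewrite HR; field; repeat split; lra).
    apply Rmult_lt_0_compat; [apply exp_pos|]. apply Rmult_lt_0_compat; apply pow_lt; lra. }
  assert (HlnX : ln X = (ln (- K / (4 * PI)) - 2 * ln x - 4 * ln ph) / (p - 1)).
  { apply (Rmult_eq_reg_l (p - 1)); [|lra]. rewrite <- ln_Rpower, HR.
    rewrite ln_div, ln_mult, !ln_pow
      by first [lra | apply pow_lt; lra | apply Rmult_lt_0_compat; apply pow_lt; lra].
    simpl INR. field. lra. }
  unfold profile. fold ph. rewrite <- HlnX, exp_ln by exact hX. rewrite Hd. ring.
Qed.

Definition drdt (s U E : R) : R := U / (s * E).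

Definition hsol (s r U E : R) : R :=
  let q := drdt s U E in let F := 1 - 1 / (r * r) in
  q * (F - s / 2 * E * (F * q - (r + 1) * (r + 1) / ((2 - s) * r))).

Definition dhsol (s r U E : R) : R :=
  let q := drdt s U E in let q' := - 1 / s - profile_logderiv s r * q in
  let F := 1 - 1 / (r * r) in let F' := 2 / (r * r * r) in
  let Z := F * q - (r + 1) * (r + 1) / ((2 - s) * r) in
  let Z' := F' * q + F * q' - F / (2 - s) in
  q' * (F - s / 2 * E * Z) + q * (F' - s / 2 * E * (profile_logderiv s r * Z + Z')).

Definition Wrate (s r U E : R) : R :=
  2 / s - 2 * (2 - s) * (r - 1) / (s * r * (r + 1)) * drdt s U E.

Definition gsol (s r U E : R) : R :=
  2 * (s - 1) * hsol s r U E - s * (2 - s) * drdt s U E * dhsol s r U E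
  - s * (4 - s) / 2 * Wrate s r U E * hsol s r U E.

Definition Ws (s r U E : R) : R := 4 * PI * (r * r) / drdt s U E ^ 2.

Definition dWs (s r U E : R) : R := Ws s r U E * Wrate s r U E / drdt s U E.

Lemma systemS_of_ode p W a g dg h dh :
  g = 2 * (p - 2) * h - (p - 1) * (3 - p) * dh - (p - 1) * (5 - p) / 2 * a * h ->
  dg + h = (p - 1) * (5 - p) / 4 * h * a ^ 2 ->
  systemS p W (W * a) g dg h dh.
Proof. intros -> Hode. unfold systemS. rewrite Hode. split; field. Qed.

Lemma hsol_Wrate_pos s r U E : 0 < s < 1 -> 1 <= r -> 0 < U -> 0 < E ->
  drdt s U E * ((2 - s) * (r - 1)) < r * (r + 1) ->
  0 < hsol s r U E /\ 0 < Wrate s r U E.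
Proof.
  intros hs hr hU hE hq.
  assert (hq0 : 0 < drdt s U E) by (unfold drdt; apply Rdiv_lt_0_compat; nra).
  set (q := drdt s U E) in *. set (D := r * (r + 1) - q * ((2 - s) * (r - 1))).
  assert (hF : 0 <= 1 - 1 / (r * r)).
  { assert (1 / (r * r) <= 1) by (apply (Rmult_le_reg_r (r * r)); [nra|]; field_simplify; nra).
    lra. }
  split.
  - unfold hsol. fold q. apply Rmult_lt_0_compat; [exact hq0|].
    set (Z := (r + 1) / ((2 - s) * (r * r)) * D).
    replace ((1 - 1 / (r * r)) * q - (r + 1) * (r + 1) / ((2 - s) * r)) with (- Z)
      by (unfold Z, D; field; lra).
    assert (0 < Z) by (apply Rmult_lt_0_compat; [apply Rdiv_lt_0_compat|]; unfold D; nra).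
    assert (0 < s / 2 * E * Z) by (apply Rmult_lt_0_compat; [apply Rmult_lt_0_compat|]; lra).
    lra.
  - unfold Wrate. fold q.
    replace (2 / s - 2 * (2 - s) * (r - 1) / (s * r * (r + 1)) * q) with (2 / (s * r * (r + 1)) * D)
      by (unfold D; field; lra).
    apply Rmult_lt_0_compat; [apply Rdiv_lt_0_compat|]; unfold D; nra.
Qed.

Lemma gsol_hsol_at_1 s E : 0 < s < 1 -> 0 < E ->
  gsol s 1 1 E + 2 * (2 - s) * hsol s 1 1 E = - (2 - s) / (s * E ^ 2).
Proof. intros hs hE. unfold gsol, hsol, dhsol, Wrate, drdt, profile_logderiv. field. lra. Qed.

(* c x^i y^j z^l; the expansions below are used with x = 1/r, y = r (q - r/(2-s) - 1)
   and z = E r^2, for which 0 <= x <= 1, |y| <= 1/s and 0 <= z <= Eb. *)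
Record monomial := Mono { mcoef : R; mdeg_x : nat; mdeg_y : nat; mdeg_z : nat }.

Definition eval_poly (ms : list monomial) (x y z : R) : R :=
  fold_right (fun m acc => mcoef m * (x ^ mdeg_x m * (y ^ mdeg_y m * z ^ mdeg_z m)) + acc) 0 ms.

Definition bound_poly (ms : list monomial) (Y Z : R) : R :=
  fold_right (fun m acc => Rabs (mcoef m) * (Y ^ mdeg_y m * Z ^ mdeg_z m) + acc) 0 ms.

Lemma eval_poly_bound ms x y z Y Z : 0 <= x <= 1 -> Rabs y <= Y -> 0 <= z <= Z ->
  Rabs (eval_poly ms x y z) <= bound_poly ms Y Z.
Proof.
  intros hx hy hz. induction ms as [|[c i j l] ms IH]; simpl; [rewrite Rabs_R0; lra|].
  eapply Rle_trans; [apply Rabs_triang|]. apply Rplus_le_compat; [|exact IH].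
  rewrite !Rabs_mult, <- !RPow_abs, (Rabs_pos_eq x), (Rabs_pos_eq z) by lra.
  apply Rmult_le_compat_l; [apply Rabs_pos|].
  assert (0 <= Rabs y) by apply Rabs_pos.
  assert (x ^ i <= 1) by (rewrite <- (pow1 i); apply pow_incr; lra).
  assert (Rabs y ^ j <= Y ^ j) by (apply pow_incr; lra).
  assert (z ^ l <= Z ^ l) by (apply pow_incr; lra).
  assert (0 <= x ^ i) by (apply pow_le; lra).
  assert (0 <= Rabs y ^ j) by (apply pow_le; lra).
  assert (0 <= z ^ l) by (apply pow_le; lra).
  rewrite <- (Rmult_1_l (Y ^ j * Z ^ l)).
  apply Rmult_le_compat; try apply Rmult_le_pos; try apply Rmult_le_compat; lra.
Qed.

Definition gsol_expansion (s : R) : list monomial := [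
  Mono (- 1 - 4 * s + s ^ 2) 0 0 0;
  Mono ((1 / 2 * s ^ 3) / (2 - s) ^ 2) 0 0 1;
  Mono (- 1 - 4 * s + s ^ 2) 1 0 0;
  Mono ((- 2 * s + 5 * s ^ 2 - 3 / 2 * s ^ 3) / (2 - s) ^ 2) 1 0 1;
  Mono (- 8 * s + 2 * s ^ 2) 1 1 0;
  Mono (1 / 2 * s) 1 1 1;
  Mono (4 - 4 * s + s ^ 2) 2 0 0;
  Mono ((- 4 * s + 15 / 2 * s ^ 2 - 3 * s ^ 3 + 1 / 2 * s ^ 4) / (2 - s)) 2 0 1;
  Mono (- 8 - 4 * s + 2 * s ^ 2) 2 1 0;
  Mono ((3 * s + 3 / 2 * s ^ 2) / (2 - s)) 2 1 1;
  Mono (4 - 4 * s + s ^ 2) 2 2 0;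
  Mono (4 - 4 * s + s ^ 2) 3 0 0;
  Mono (- 7 / 2 * s + 3 * s ^ 2 - 1 / 2 * s ^ 3) 3 0 1;
  Mono (- 4 * s + 2 * s ^ 2) 3 1 0;
  Mono ((3 * s + 27 / 2 * s ^ 2 - 9 * s ^ 3 + 3 / 2 * s ^ 4) / (2 - s)) 3 1 1;
  Mono (- 4 + s ^ 2) 3 2 0;
  Mono (- 4 * s + 3 * s ^ 2 - 1 / 2 * s ^ 3) 4 0 1;
  Mono (8 - 8 * s + 2 * s ^ 2) 4 1 0;
  Mono (1 / 2 * s + 6 * s ^ 2 - 3 / 2 * s ^ 3) 4 1 1;
  Mono (- 4 + s ^ 2) 4 2 0;
  Mono (6 * s ^ 2 - 3 / 2 * s ^ 3) 4 2 1;
  Mono (- 2 * s + 2 * s ^ 2 - 1 / 2 * s ^ 3) 5 0 1;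
  Mono (- 6 * s + 6 * s ^ 2 - 3 / 2 * s ^ 3) 5 1 1;
  Mono (4 - 4 * s + s ^ 2) 5 2 0;
  Mono (6 * s + 3 * s ^ 2 - 3 / 2 * s ^ 3) 5 2 1;
  Mono (- 2 * s + 2 * s ^ 2 - 1 / 2 * s ^ 3) 5 3 1;
  Mono (- 6 * s + 6 * s ^ 2 - 3 / 2 * s ^ 3) 6 1 1;
  Mono (3 * s ^ 2 - 3 / 2 * s ^ 3) 6 2 1;
  Mono (2 * s - 1 / 2 * s ^ 3) 6 3 1;
  Mono (- 6 * s + 6 * s ^ 2 - 3 / 2 * s ^ 3) 7 2 1;
  Mono (2 * s - 1 / 2 * s ^ 3) 7 3 1;
  Mono (- 2 * s + 2 * s ^ 2 - 1 / 2 * s ^ 3) 8 3 1 ].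

Definition hsol_expansion (s : R) : list monomial := [
  Mono (- 1 / (2 - s)) 0 0 0;
  Mono ((1 / 2 * s ^ 2) / (2 - s) ^ 2) 0 0 1;
  Mono 1 0 1 0;
  Mono (- 1) 1 0 0;
  Mono ((s + s ^ 2 - 1 / 2 * s ^ 3) / (2 - s) ^ 2) 1 0 1;
  Mono ((- 1 / 2 * s) / (2 - s)) 1 1 1;
  Mono ((3 / 2 * s) / (2 - s)) 2 0 1;
  Mono (- 1) 2 1 0;
  Mono ((- s + s ^ 2) / (2 - s)) 2 1 1;
  Mono (1 / 2 * s) 3 0 1;
  Mono ((3 / 2 * s) / (2 - s)) 3 1 1;
  Mono (- 1 / 2 * s) 3 2 1;
  Mono s 4 1 1;
  Mono (1 / 2 * s) 5 2 1 ].

Lemma gsol_expansion_eq s r U E : 0 < s < 1 -> 1 <= r -> 0 < E ->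
  (gsol s r U E - (- r - 4 / (2 - s))) * (r + 1)
  = eval_poly (gsol_expansion s) (/ r) (r * (drdt s U E - r / (2 - s) - 1)) (E * (r * r)).
Proof.
  intros hs hr hE. unfold eval_poly, gsol_expansion; simpl.
  unfold gsol, hsol, dhsol, Wrate, drdt, profile_logderiv. field. repeat split; nra.
Qed.

Lemma hsol_expansion_eq s r U E : 0 < s < 1 -> 1 <= r -> 0 < E ->
  (hsol s r U E - (r / (2 - s) + 1)) * r
  = eval_poly (hsol_expansion s) (/ r) (r * (drdt s U E - r / (2 - s) - 1)) (E * (r * r)).
Proof.
  intros hs hr hE. unfold eval_poly, hsol_expansion; simpl.
  unfold hsol, drdt. field. repeat split; nra.
Qed.

Lemma bound_poly_nonneg ms Y Z : 0 <= Y -> 0 <= Z -> 0 <= bound_poly ms Y Z.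
Proof.
  intros hY hZ. induction ms as [|[c i j l] ms IH]; simpl; [lra|].
  assert (0 <= Rabs c * (Y ^ j * Z ^ l))
    by (apply Rmult_le_pos; [apply Rabs_pos | apply Rmult_le_pos; apply pow_le; lra]).
  lra.
Qed.

Lemma abs_le_div_of_mul X m r B : 1 <= r -> r <= m -> Rabs (X * m) <= B -> Rabs X <= B / r.
Proof.
  intros hr hm H. rewrite Rabs_mult, (Rabs_pos_eq m) in H by lra.
  apply (Rmult_le_reg_r r); [lra|]. replace (B / r * r) with B by (field; lra).
  assert (0 <= Rabs X) by apply Rabs_pos. nra.
Qed.

Lemma gsol_hsol_asymptotic_bounds s r U E Eb : 0 < s < 1 -> 1 <= r -> 0 < E -> E * (r * r) <= Eb ->
  r / (2 - s) + 1 < drdt s U E < r / (2 - s) + 1 + 1 / (s * r) ->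
  Rabs (gsol s r U E - (- r - 4 / (2 - s))) <= bound_poly (gsol_expansion s) (/ s) Eb / r /\
  Rabs (hsol s r U E - (r / (2 - s) + 1)) <= bound_poly (hsol_expansion s) (/ s) Eb / r.
Proof.
  intros hs hr hE hEb hq.
  assert (hx : 0 <= / r <= 1).
  { split; [apply Rlt_le, Rinv_0_lt_compat; lra|].
    rewrite <- Rinv_1. apply Rinv_le_contravar; lra. }
  assert (hth : Rabs (r * (drdt s U E - r / (2 - s) - 1)) <= / s).
  { replace (/ s) with (r * (1 / (s * r))) by (field; lra). rewrite Rabs_pos_eq by nra. nra. }
  assert (he : 0 <= E * (r * r) <= Eb) by (split; [nra | exact hEb]).
  split.
  - apply (abs_le_div_of_mul _ (r + 1)); [lra | lra |].
    rewrite gsol_expansion_eq by assumption. now apply eval_poly_bound.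
  - apply (abs_le_div_of_mul _ r); [lra | lra |].
    rewrite hsol_expansion_eq by assumption. now apply eval_poly_bound.
Qed.

(* U stands for u_s (continued to the left of r = 1) and E for -u_s'. *)
Section Profile.
Variables (s : R) (U E : R -> R) (Eb : R).
Hypotheses (hs : 0 < s < 1)
  (HU : forall r, 1 <= r -> is_derive U r (- E r))
  (HE : forall r, 1 <= r -> is_derive E r (profile_logderiv s r * E r))
  (HEpos : forall r, 1 <= r -> 0 < E r)
  (HEb : forall r, 1 <= r -> E r * (r * r) <= Eb)
  (HUlim : is_lim U p_infty 0).

Lemma Derive_U r : 1 <= r -> Derive (fun x => U x) r = - E r.
Proof. intro hr. exact (is_derive_unique _ _ _ (HU r hr)). Qed.

Lemma Derive_E r : 1 <= r -> Derive (fun x => E x) r = profile_logderiv s r * E r.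
Proof. intro hr. exact (is_derive_unique _ _ _ (HE r hr)). Qed.

Lemma U_pos r : 1 <= r -> 0 < U r.
Proof.
  intro hr. apply (pos_of_decreasing_to_0 U (fun y => - E y) r); [| |exact HUlim].
  - intros y hy. apply HU. lra.
  - intros y hy. assert (0 < E y) by (apply HEpos; lra). lra.
Qed.

Lemma is_lim_E_mul (P : R -> R) C a : 1 <= a -> (forall y, a <= y -> 0 <= P y <= C * y) ->
  is_lim (fun y => s * E y * P y) p_infty 0.
Proof.
  intros ha HP. apply (is_lim_pinfty_0_of_abs_le _ (s * Eb * C) a); [lra|].
  intros y hy. specialize (HP y hy).
  assert (hE := HEpos y ltac:(lra)). assert (hEb := HEb y ltac:(lra)).
  assert (hC : 0 <= C) by nra.
  rewrite Rabs_pos_eq by (apply Rmult_le_pos; [apply Rmult_le_pos|]; lra).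
  apply (Rmult_le_reg_r y); [lra|].
  replace (s * Eb * C / y * y) with (s * (Eb * C)) by (field; lra).
  replace (s * E y * P y * y) with (s * (E y * (P y * y))) by ring.
  apply Rmult_le_compat_l; [lra|].
  assert (E y * (P y * y) <= E y * (C * y * y))
    by (apply Rmult_le_compat_l; [|apply Rmult_le_compat_r]; lra).
  assert (0 <= C * (Eb - E y * (y * y))) by (apply Rmult_le_pos; lra).
  nra.
Qed.

Lemma U_gt_of_subsolution (V V' : R -> R) a : 1 <= a ->
  (forall y, a <= y -> is_derive V y (V' y)) -> (forall y, a <= y -> 0 < V' y + E y) ->
  is_lim V p_infty 0 -> V a < U a.
Proof.
  intros ha HV Hsign HVlim.
  enough (0 < U a - V a) by lra.
  apply (pos_of_decreasing_to_0 (fun y => U y - V y) (fun y => - E y - V' y) a).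
  - intros y hy. exact (is_derive_minus _ _ _ _ _ (HU y ltac:(lra)) (HV y hy)).
  - intros y hy. specialize (Hsign y hy). lra.
  - replace (Finite 0) with (Finite (0 - 0)) by (f_equal; ring). now apply is_lim_minus'.
Qed.

Lemma U_lt_of_supersolution (V V' : R -> R) a : 1 <= a ->
  (forall y, a <= y -> is_derive V y (V' y)) -> (forall y, a <= y -> V' y + E y < 0) ->
  is_lim V p_infty 0 -> U a < V a.
Proof.
  intros ha HV Hsign HVlim.
  enough (0 < V a - U a) by lra.
  apply (pos_of_decreasing_to_0 (fun y => V y - U y) (fun y => V' y + E y) a).
  - intros y hy. replace (V' y + E y) with (V' y - - E y) by ring.
    exact (is_derive_minus _ _ _ _ _ (HV y hy) (HU y ltac:(lra))).
  - exact Hsign.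
  - replace (Finite 0) with (Finite (0 - 0)) by (f_equal; ring). now apply is_lim_minus'.
Qed.

Lemma is_derive_E_mul (P P' : R -> R) y : 1 <= y -> is_derive P y (P' y) ->
  is_derive (fun x => s * E x * P x) y (s * E y * (profile_logderiv s y * P y + P' y)).
Proof.
  intros hy HP. auto_derive.
  - split; [eexists; exact (HE y hy)|]. split; [eexists; exact HP | exact I].
  - rewrite Derive_E by exact hy.
    replace (Derive (fun x => P x) y) with (P' y) by (symmetry; now apply is_derive_unique).
    ring.
Qed.

Lemma U_lower_bound r : 1 <= r -> s * E r * (r / (2 - s) + 1) < U r.
Proof.
  intro hr.
  apply (U_gt_of_subsolution (fun y => s * E y * (y / (2 - s) + 1))
           (fun y => s * E y * (profile_logderiv s y * (y / (2 - s) + 1) + / (2 - s))) r hr).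
  - intros y hy. apply (is_derive_E_mul (fun y => y / (2 - s) + 1) (fun _ => / (2 - s))); [lra|].
    auto_derive; [easy | field; lra].
  - intros y hy. assert (0 < E y) by (apply HEpos; lra).
    replace (s * E y * (profile_logderiv s y * (y / (2 - s) + 1) + / (2 - s)) + E y)
      with (E y * (2 * (1 - s) / (y * (y + 1)))) by (unfold profile_logderiv; field; lra).
    apply Rmult_lt_0_compat; [lra|]. apply Rdiv_lt_0_compat; nra.
  - apply (is_lim_E_mul _ (1 / (2 - s) + 1) 1); [lra|]. intros y hy.
    assert (0 < 1 / (2 - s)) by (apply Rdiv_lt_0_compat; lra).
    replace (y / (2 - s)) with (1 / (2 - s) * y) by (field; lra). nra.
Qed.

Lemma U_upper_bound r : 1 <= r -> U r < s * E r * (r / (2 - s) + 1 + 1 / (s * r)).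
Proof.
  intro hr.
  apply (U_lt_of_supersolution (fun y => s * E y * (y / (2 - s) + 1 + 1 / (s * y)))
           (fun y => s * E y * (profile_logderiv s y * (y / (2 - s) + 1 + 1 / (s * y))
                                + (/ (2 - s) - / (s * y ^ 2)))) r hr).
  - intros y hy.
    apply (is_derive_E_mul (fun y => y / (2 - s) + 1 + 1 / (s * y))
             (fun y => / (2 - s) - / (s * y ^ 2))); [lra|].
    auto_derive; [nra | field; lra].
  - intros y hy. assert (0 < E y) by (apply HEpos; lra).
    replace (s * E y * (profile_logderiv s y * (y / (2 - s) + 1 + 1 / (s * y))
                        + (/ (2 - s) - / (s * y ^ 2))) + E y)
      with (- (E y * (((2 * s ^ 2 - s + 2) * y - 2 + 3 * s) / (s * (y * y * (y + 1))))))
      by (unfold profile_logderiv; field; lra).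
    enough (0 < E y * (((2 * s ^ 2 - s + 2) * y - 2 + 3 * s) / (s * (y * y * (y + 1))))) by lra.
    apply Rmult_lt_0_compat; [lra|]. apply Rdiv_lt_0_compat; [nra|].
    apply Rmult_lt_0_compat; [lra|]. apply Rmult_lt_0_compat; nra.
  - apply (is_lim_E_mul _ (1 / (2 - s) + 1 + 1 / s) 1); [lra|]. intros y hy.
    assert (0 < 1 / (2 - s)) by (apply Rdiv_lt_0_compat; lra).
    assert (0 < 1 / (s * y) <= 1 / s * y).
    { split; [apply Rdiv_lt_0_compat; nra|].
      apply (Rmult_le_reg_r (s * y)); [nra|]. field_simplify; [nra | lra | lra]. }
    replace (y / (2 - s)) with (1 / (2 - s) * y) by (field; lra). nra.
Qed.

Lemma U_pole_bound r : 1 < r -> U r < s * E r * (r * (r + 1) / ((2 - s) * (r - 1))).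
Proof.
  intro hr.
  apply (U_lt_of_supersolution (fun y => s * E y * (y * (y + 1) / ((2 - s) * (y - 1))))
           (fun y => s * E y * (profile_logderiv s y * (y * (y + 1) / ((2 - s) * (y - 1)))
                                + (y ^ 2 - 2 * y - 1) / ((2 - s) * (y - 1) ^ 2))) r); [lra| | |].
  - intros y hy. apply (is_derive_E_mul (fun y => y * (y + 1) / ((2 - s) * (y - 1)))
             (fun y => (y ^ 2 - 2 * y - 1) / ((2 - s) * (y - 1) ^ 2))); [lra|].
    auto_derive; [nra | field; lra].
  - intros y hy. assert (0 < E y) by (apply HEpos; lra).
    replace (s * E y * (profile_logderiv s y * (y * (y + 1) / ((2 - s) * (y - 1)))
                        + (y ^ 2 - 2 * y - 1) / ((2 - s) * (y - 1) ^ 2)) + E y)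
      with (- (E y * (2 * s * y / ((2 - s) * (y - 1) ^ 2))))
      by (unfold profile_logderiv; field; lra).
    enough (0 < E y * (2 * s * y / ((2 - s) * (y - 1) ^ 2))) by lra.
    apply Rmult_lt_0_compat; [lra|]. apply Rdiv_lt_0_compat; [nra|].
    apply Rmult_lt_0_compat; [lra | apply pow_lt; lra].
  - apply (is_lim_E_mul _ ((r + 1) / ((2 - s) * (r - 1))) r); [lra|]. intros y hy.
    assert (0 < (2 - s) * (r - 1)) by nra. assert (0 < (2 - s) * (y - 1)) by nra.
    split; [apply Rdiv_le_0_compat; nra|].
    replace (y * (y + 1) / ((2 - s) * (y - 1)))
      with ((r + 1) / ((2 - s) * (r - 1)) * y - 2 * y * (y - r) / ((2 - s) * (r - 1) * (y - 1)))
      by (field; lra).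
    enough (0 <= 2 * y * (y - r) / ((2 - s) * (r - 1) * (y - 1))) by lra.
    apply Rdiv_le_0_compat; nra.
Qed.

Lemma drdt_bounds r : 1 <= r ->
  r / (2 - s) + 1 < drdt s (U r) (E r) < r / (2 - s) + 1 + 1 / (s * r).
Proof.
  intro hr. assert (hE := HEpos r hr). assert (hsE : 0 < s * E r) by (apply Rmult_lt_0_compat; lra).
  assert (hlo := U_lower_bound r hr). assert (hhi := U_upper_bound r hr).
  unfold drdt. split; apply (Rmult_lt_reg_r (s * E r)); try exact hsE;
    replace (U r / (s * E r) * (s * E r)) with (U r) by (field; lra); lra.
Qed.

Lemma drdt_pole_bound r : 1 <= r -> drdt s (U r) (E r) * ((2 - s) * (r - 1)) < r * (r + 1).
Proof.
  intro hr. destruct (Rle_lt_or_eq_dec 1 r hr) as [hr1|<-]; [|lra].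
  assert (hE := HEpos r hr). assert (hsE : 0 < s * E r) by (apply Rmult_lt_0_compat; lra).
  assert (hpole := U_pole_bound r hr1).
  replace (r * (r + 1)) with (r * (r + 1) / ((2 - s) * (r - 1)) * ((2 - s) * (r - 1)))
    by (field; lra).
  apply Rmult_lt_compat_r; [nra|]. unfold drdt.
  apply (Rmult_lt_reg_r (s * E r)); [exact hsE|].
  replace (U r / (s * E r) * (s * E r)) with (U r) by (field; lra). lra.
Qed.

Ltac side_conditions r hr :=
  assert (0 < E r) by (apply HEpos, hr); assert (0 < U r) by (apply U_pos, hr);
  repeat split;
  match goal with
  | |- ex_derive (fun x => U x) r => exists (- E r); exact (HU r hr)
  | |- ex_derive (fun x => E x) r => exists (profile_logderiv s r * E r); exact (HE r hr)
  | |- _ <> 0 => apply Rgt_not_eq; repeat (apply Rmult_lt_0_compat || apply Rinv_0_lt_compat); lra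
  end.

Lemma hsol_deriv r : 1 <= r ->
  is_derive (fun x => hsol s x (U x) (E x)) r (dhsol s r (U r) (E r)).
Proof.
  intro hr. unfold hsol, drdt; cbv zeta. auto_derive; [side_conditions r hr|].
  rewrite Derive_U, Derive_E by exact hr. unfold dhsol, drdt, profile_logderiv.
  field. assert (0 < E r) by (apply HEpos, hr). repeat split; nra.
Qed.

Lemma Ws_deriv r : 1 <= r ->
  is_derive (fun x => Ws s x (U x) (E x)) r (dWs s r (U r) (E r)).
Proof.
  intro hr. unfold Ws, drdt. auto_derive; [side_conditions r hr|].
  rewrite Derive_U, Derive_E by exact hr. unfold dWs, Ws, Wrate, drdt, profile_logderiv.
  field. assert (0 < E r) by (apply HEpos, hr). assert (0 < U r) by (apply U_pos, hr).
  repeat split; nra.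
Qed.

Lemma gsol_ode r : 1 <= r ->
  ex_derive (fun x => gsol s x (U x) (E x)) r /\
  drdt s (U r) (E r) * Derive (fun x => gsol s x (U x) (E x)) r + hsol s r (U r) (E r)
  = s * (4 - s) / 4 * hsol s r (U r) (E r) * Wrate s r (U r) (E r) ^ 2.
Proof.
  intro hr. evar (l : R).
  assert (HD : is_derive (fun x => gsol s x (U x) (E x)) r l).
  { unfold gsol, hsol, dhsol, Wrate, drdt, profile_logderiv; cbv zeta.
    auto_derive; [side_conditions r hr|].
    subst l; reflexivity. }
  split; [exists l; exact HD|].
  replace (Derive (fun x => gsol s x (U x) (E x)) r) with l
    by (symmetry; now apply is_derive_unique).
  subst l.
  rewrite Derive_U, Derive_E by exact hr. unfold gsol, hsol, dhsol, Wrate, drdt, profile_logderiv.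
  field. assert (0 < E r) by (apply HEpos, hr). assert (0 < U r) by (apply U_pos, hr).
  repeat split; nra.
Qed.

Section Reparametrization.
Variable rho : R -> R.
Hypotheses (HU1 : U 1 = 1)
  (Hrho : forall t, 0 <= t -> 1 <= rho t /\ - s * ln (U (rho t)) = t).

Lemma w_deriv r : 1 <= r -> is_derive (fun x => - s * ln (U x)) r (s * E r / U r).
Proof.
  intro hr. assert (hU := U_pos r hr). auto_derive.
  - repeat split; [exists (- E r); exact (HU r hr) | exact hU].
  - rewrite Derive_U by exact hr. field. lra.
Qed.

Lemma w_increasing x y : 1 <= x -> x < y -> - s * ln (U x) < - s * ln (U y).
Proof.
  apply (increasing_of_deriv_pos (fun x => - s * ln (U x)) (fun r => s * E r / U r) 1);
    [exact w_deriv|].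
  intros z hz.
  apply Rdiv_lt_0_compat; [apply Rmult_lt_0_compat; [lra | apply HEpos, hz] | apply U_pos, hz].
Qed.

Lemma reparam_deriv (f : R -> R) f' t : 0 <= t -> is_derive f (rho t) f' ->
  deriv_within (fun y => 0 <= y) (fun y => f (rho y)) t (drdt s (U (rho t)) (E (rho t)) * f').
Proof.
  intros ht Hf. destruct (Hrho t ht) as [hr _].
  assert (hE := HEpos _ hr). assert (hU := U_pos _ hr).
  replace (drdt s (U (rho t)) (E (rho t)) * f') with (f' / (s * E (rho t) / U (rho t)))
    by (unfold drdt; field; repeat split; lra).
  apply (deriv_within_comp_inverse _ _ _ 1 w_increasing Hrho f (fun r => s * E r / U r));
    try assumption.
  - exact (w_deriv _ hr).
  - apply Rgt_not_eq, Rdiv_lt_0_compat; [apply Rmult_lt_0_compat|]; lra.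
Qed.

Lemma rho_w r : 1 <= r -> rho (- s * ln (U r)) = r.
Proof.
  intro hr. assert (ht : 0 <= - s * ln (U r)).
  { destruct (Rle_lt_or_eq_dec 1 r hr) as [h|<-].
    - rewrite <- (Rmult_0_r (- s)), <- ln_1, <- HU1. apply Rlt_le, w_increasing; lra.
    - rewrite HU1, ln_1. lra. }
  destruct (Hrho _ ht) as [h1 h2].
  destruct (Rtotal_order (rho (- s * ln (U r))) r) as [lt|[eq|gt]]; [exfalso | exact eq | exfalso].
  - assert (h := w_increasing _ _ h1 lt). lra.
  - assert (h := w_increasing _ _ hr gt). lra.
Qed.

Definition g_t t := gsol s (rho t) (U (rho t)) (E (rho t)).
Definition dg_t t :=
  drdt s (U (rho t)) (E (rho t)) * Derive (fun r => gsol s r (U r) (E r)) (rho t).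
Definition h_t t := hsol s (rho t) (U (rho t)) (E (rho t)).
Definition dh_t t := drdt s (U (rho t)) (E (rho t)) * dhsol s (rho t) (U (rho t)) (E (rho t)).
Definition W_t t := Ws s (rho t) (U (rho t)) (E (rho t)).
Definition dW_t t := W_t t * Wrate s (rho t) (U (rho t)) (E (rho t)).

Lemma g_t_deriv t : 0 <= t -> deriv_within (fun y => 0 <= y) g_t t (dg_t t).
Proof.
  intro ht. apply (reparam_deriv (fun r => gsol s r (U r) (E r))); [exact ht|].
  apply Derive_correct, gsol_ode, Hrho, ht.
Qed.

Lemma h_t_deriv t : 0 <= t -> deriv_within (fun y => 0 <= y) h_t t (dh_t t).
Proof.
  intro ht. apply (reparam_deriv (fun r => hsol s r (U r) (E r))); [exact ht|].
  apply hsol_deriv, Hrho, ht.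
Qed.

Lemma W_t_deriv t : 0 <= t -> deriv_within (fun y => 0 <= y) W_t t (dW_t t).
Proof.
  intro ht. destruct (Hrho t ht) as [hr _].
  assert (hE := HEpos _ hr). assert (hU := U_pos _ hr).
  replace (dW_t t) with (drdt s (U (rho t)) (E (rho t)) * dWs s (rho t) (U (rho t)) (E (rho t)))
    by (unfold dW_t, W_t, dWs, drdt; field; repeat split; lra).
  apply (reparam_deriv (fun r => Ws s r (U r) (E r))); [exact ht|].
  apply Ws_deriv, hr.
Qed.

Lemma systemS_t t : 0 <= t ->
  systemS (s + 1) (W_t t) (dW_t t) (g_t t) (dg_t t) (h_t t) (dh_t t).
Proof.
  intro ht. destruct (gsol_ode (rho t) (proj1 (Hrho t ht))) as [_ Hode].
  apply systemS_of_ode.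
  - unfold g_t, dh_t, h_t, gsol. field.
  - unfold dg_t, h_t. rewrite Hode. field.
Qed.

Lemma g_t_h_t_initial : g_t 0 + 2 * (2 - s) * h_t 0 < 0.
Proof.
  assert (H0 : rho 0 = 1) by (rewrite <- (rho_w 1), HU1, ln_1, Rmult_0_r by lra; reflexivity).
  assert (hE := HEpos 1 (Rle_refl 1)).
  unfold g_t, h_t. rewrite H0, HU1, gsol_hsol_at_1 by assumption.
  enough (0 < (2 - s) / (s * E 1 ^ 2)) by lra.
  apply Rdiv_lt_0_compat; [lra|]. apply Rmult_lt_0_compat; [lra | apply pow_lt; lra].
Qed.

Lemma h_t_dg_t_pos t : 0 <= t -> 0 < h_t t /\ 0 < dg_t t + h_t t.
Proof.
  intro ht. destruct (Hrho t ht) as [hr _].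
  destruct (hsol_Wrate_pos s (rho t) (U (rho t)) (E (rho t))) as [hh ha];
    [exact hs | exact hr | apply U_pos, hr | apply HEpos, hr | apply drdt_pole_bound, hr|].
  destruct (gsol_ode _ hr) as [_ Hode].
  unfold dg_t, h_t in *. rewrite Hode. split; [exact hh|].
  apply Rmult_lt_0_compat; [|apply pow_lt; lra].
  apply Rmult_lt_0_compat; [apply Rdiv_lt_0_compat|]; nra.
Qed.

Lemma g_t_h_t_asymptotics : exists C, forall r, 1 <= r ->
  Rabs (g_t (- s * ln (U r)) - (- r - 4 / (2 - s))) <= C / r /\
  Rabs (h_t (- s * ln (U r)) - (r / (2 - s) + 1)) <= C / r.
Proof.
  set (Cg := bound_poly (gsol_expansion s) (/ s) Eb).
  set (Ch := bound_poly (hsol_expansion s) (/ s) Eb).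
  assert (hEb0 : 0 <= Eb)
    by (assert (h := HEb 1 (Rle_refl 1)); assert (h' := HEpos 1 (Rle_refl 1)); nra).
  assert (hs' : 0 <= / s) by (apply Rlt_le, Rinv_0_lt_compat; lra).
  assert (hCg : 0 <= Cg) by (apply bound_poly_nonneg; assumption).
  assert (hCh : 0 <= Ch) by (apply bound_poly_nonneg; assumption).
  exists (Cg + Ch). intros r hr. unfold g_t, h_t. rewrite rho_w by exact hr.
  destruct (gsol_hsol_asymptotic_bounds s r (U r) (E r) Eb) as [hg hh];
    [exact hs | exact hr | apply HEpos, hr | apply HEb, hr | apply drdt_bounds, hr |].
  assert (Cg / r <= (Cg + Ch) / r /\ Ch / r <= (Cg + Ch) / r) as [h1 h2]
    by (split; apply Rmult_le_compat_r; try (apply Rlt_le, Rinv_0_lt_compat); lra).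
  fold Cg in hg. fold Ch in hh. split; lra.
Qed.

End Reparametrization.
End Profile.

Section RadialSolution.
Variables (s : R) (u du : R -> R).
Hypotheses (hs : 0 < s < 1) (Hu : is_radial_plap_solution (s + 1) u du).

Definition flux_kappa : R := - plap_flux_s (s + 1) du 1 / (4 * PI).

Definition u_ext : R -> R := extend_left 1 u du.

Lemma u_ext_deriv_du x : 1 <= x -> is_derive u_ext x (du x).
Proof. apply is_derive_extend_left, Hu. Qed.

Lemma u_ext_1 : u_ext 1 = 1.
Proof. unfold u_ext. rewrite extend_left_eq by lra. apply Hu. Qed.

Lemma u_ext_lim : is_lim u_ext p_infty 0.
Proof.
  destruct Hu as [_ [_ [_ Hlim]]]. apply is_lim_spec. intro eps.
  destruct (Hlim eps (cond_pos eps)) as [M HM]. exists (Rmax 1 M). intros y hy.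
  assert (h1 := Rmax_l 1 M). assert (h2 := Rmax_r 1 M).
  unfold u_ext. rewrite extend_left_eq, Rminus_0_r by lra. apply HM. lra.
Qed.

Lemma flux_const x : 1 <= x -> plap_flux_s (s + 1) du x = plap_flux_s (s + 1) du 1.
Proof.
  intro hx. set (fl := plap_flux_s (s + 1) du).
  rewrite <- (extend_left_eq 1 fl (fun _ => 0) x), <- (extend_left_eq 1 fl (fun _ => 0) 1) by lra.
  apply (constant_of_deriv_zero _ (fun _ => 0)); [|reflexivity | exact hx].
  apply is_derive_extend_left, Hu.
Qed.

Lemma flux_neg : plap_flux_s (s + 1) du 1 < 0.
Proof.
  destruct (Rlt_or_le (plap_flux_s (s + 1) du 1) 0) as [h|h]; [exact h|exfalso].
  assert (Hdu : forall x, 1 <= x -> 0 <= du x).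
  { intros x hx. destruct (plap_flux_s_factor (s + 1) du x) as [c [hc e]]; [lra|].
    rewrite flux_const in e by exact hx. nra. }
  assert (Hge : Rbar_le 1 0).
  { apply (is_lim_le_loc (fun _ => 1) u_ext p_infty); [|apply is_lim_const | exact u_ext_lim].
    exists 1. intros y hy. rewrite <- u_ext_1.
    apply (nondecreasing_of_deriv_nonneg u_ext du 1); try lra; [exact u_ext_deriv_du | exact Hdu]. }
  simpl in Hge. lra.
Qed.

Lemma du_eq x : 1 <= x -> du x = - profile s flux_kappa x.
Proof.
  intro hx. assert (hneg := flux_neg).
  destruct (plap_flux_s_factor (s + 1) du x) as [c [hc e]]; [lra|].
  rewrite flux_const in e by exact hx.
  replace s with (s + 1 - 1) at 1 by ring.
  apply plap_flux_s_solve; [lra | lra | nra | apply flux_const, hx].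
Qed.

Lemma u_ext_deriv x : 1 <= x -> is_derive u_ext x (- profile s flux_kappa x).
Proof. intro hx. rewrite <- du_eq by exact hx. now apply u_ext_deriv_du. Qed.

Lemma flux_kappa_pos : 0 < flux_kappa.
Proof.
  assert (hneg := flux_neg). assert (PI > 0) by apply PI_RGT_0.
  unfold flux_kappa. apply Rdiv_lt_0_compat; lra.
Qed.

Lemma u_ext_pos x : 1 <= x -> 0 < u_ext x.
Proof.
  apply (U_pos u_ext (profile s flux_kappa)); [exact u_ext_deriv | | exact u_ext_lim].
  intros r hr. apply profile_pos. lra.
Qed.

Lemma u_ext_profile :
  (forall r, 1 <= r -> is_derive u_ext r (- profile s flux_kappa r)) /\
  (forall r, 1 <= r ->
     is_derive (profile s flux_kappa) r (profile_logderiv s r * profile s flux_kappa r)) /\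
  (forall r, 1 <= r -> 0 < profile s flux_kappa r) /\
  (forall r, 1 <= r -> profile s flux_kappa r * (r * r) <= exp (ln flux_kappa / s)) /\
  is_lim u_ext p_infty 0 /\ u_ext 1 = 1.
Proof.
  split; [exact u_ext_deriv|]. split; [intros r hr; apply profile_deriv; lra|].
  split; [intros r hr; apply profile_pos; lra|].
  split; [intros r hr; apply profile_mul_sqr_le; [exact hs | exact flux_kappa_pos | exact hr]|].
  split; [exact u_ext_lim | exact u_ext_1].
Qed.

Lemma w_of_eq r : 1 <= r -> w_of (s + 1) u r = - s * ln (u_ext r).
Proof. intro hr. unfold w_of, u_ext. rewrite extend_left_eq by exact hr. f_equal. ring. Qed.

Lemma rho_inverse_u_ext (rho : R -> R) :
  (forall t, 0 <= t -> 1 <= rho t /\ w_of (s + 1) u (rho t) = t) ->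
  forall t, 0 <= t -> 1 <= rho t /\ - s * ln (u_ext (rho t)) = t.
Proof.
  intros Hrho t ht. destruct (Hrho t ht) as [hr e]. split; [exact hr|].
  rewrite <- w_of_eq by exact hr. exact e.
Qed.

Lemma W_of_eq rho t : 1 <= rho t ->
  W_of (s + 1) u du rho t = W_t s u_ext (profile s flux_kappa) rho t.
Proof.
  intro hr. assert (hu := u_ext_pos _ hr).
  assert (hE := profile_pos s flux_kappa (rho t) ltac:(lra)).
  assert (hph := phi_s_gt_1 (rho t) ltac:(lra)).
  unfold u_ext in hu. rewrite extend_left_eq in hu by exact hr.
  unfold W_of, W_t, Ws, drdt, u_ext, grad_norm_s, dw_of, sphere_area_s.
  rewrite extend_left_eq, du_eq by exact hr.
  rewrite <- Rsqr_pow2, Rsqr_div', <- Rsqr_abs, !Rsqr_pow2 by lra.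
  field. repeat split; lra.
Qed.

End RadialSolution.

Theorem proposition3p11 (p : R) (hp : 1 < p < 2) (u du rho : R -> R)
  (Hu : is_radial_plap_solution p u du)
  (Hrho : forall t, 0 <= t -> 1 <= rho t /\ w_of p u (rho t) = t) :
  exists g dg h dh dW : R -> R,
    (forall t, 0 <= t ->
       deriv_within (fun s => 0 <= s) g t (dg t) /\
       deriv_within (fun s => 0 <= s) h t (dh t) /\
       deriv_within (fun s => 0 <= s) (W_of p u du rho) t (dW t)) /\
    (forall t, 0 <= t ->
       systemS p (W_of p u du rho t) (dW t) (g t) (dg t) (h t) (dh t)) /\
    g 0 + 2 * (3 - p) * h 0 < 0 /\
    (forall t, 0 <= t -> 0 < h t /\ 0 < dg t + h t) /\
    (exists C R0, 1 <= R0 /\ forall r, R0 <= r ->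
       Rabs (g (w_of p u r) - (- r - 4 / (3 - p))) <= C / r /\
       Rabs (h (w_of p u r) - (r / (3 - p) + 1)) <= C / r).
Proof.
  remember (p - 1) as s eqn:Hs. replace p with (s + 1) in * by lra. clear Hs.
  assert (hs : 0 < s < 1) by lra. replace (3 - (s + 1)) with (2 - s) by ring.
  destruct (u_ext_profile s u du hs Hu) as (HU & HE & HEpos & HEb & HUlim & HU1).
  pose proof (rho_inverse_u_ext s u du rho Hrho) as Hw.
  set (U := u_ext u du) in *. set (E := profile s (flux_kappa s du)) in *.
  assert (HW : forall t, 0 <= t -> W_of (s + 1) u du rho t = W_t s U E rho t)
    by (intros t ht; apply W_of_eq; [exact hs | exact Hu | apply Hw, ht]).
  exists (g_t s U E rho), (dg_t s U E rho), (h_t s U E rho), (dh_t s U E rho), (dW_t s U E rho).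
  split; [|split; [|split; [|split]]].
  - intros t ht. split; [|split].
    + eapply g_t_deriv; eassumption.
    + eapply h_t_deriv; eassumption.
    + apply (deriv_within_ext _ (W_t s U E rho));
        [intros y hy; symmetry; apply HW, hy | exact ht |].
      eapply W_t_deriv; eassumption.
  - intros t ht. rewrite HW by exact ht. eapply systemS_t; eassumption.
  - eapply g_t_h_t_initial; eassumption.
  - intros t ht. eapply h_t_dg_t_pos; eassumption.
  - destruct (g_t_h_t_asymptotics s U E _ hs HU HE HEpos HEb HUlim rho HU1 Hw) as [C HC].
    exists C, 1. split; [lra|]. intros r hr. rewrite (w_of_eq s u du) by exact hr. apply HC, hr.
Qed.
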